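(* Let $p$ be an odd prime, $n$ a positive integer, $N=p^n$, and $\omega_N=e^{2\pi\sqrt{-1}/N}$. For $1\le k\le n$ let $D_0^{(p^k)}$ (resp. $D_1^{(p^k)}$) be the set of nonzero squares (resp. non-squares) among the units of $\mathbb{Z}_{p^k}$, i.e. $D_i^{(p^k)}=\{g^{2t+i}\bmod p^k\mid t=0,\dots,\frac{(p-1)p^{k-1}}{2}-1\}$ for a primitive root $g$ modulo $p^n$. For $0\le m<k\le n$ and $i\in\{0,1\}$, regard $p^{m}D_i^{(p^{k})}=\{p^{m}x\bmod p^{m+k} : x\in D_i^{(p^k)}\}$, and in particular $p^{n-k}D_i^{(p^k)}$ and $p^mD_i^{(p^{n-m})}$ as subsets of $\mathbb{Z}_{p^n}$. Let $$C_1=\{0\}\cup\bigcup_{k=1}^{n}p^{n-k}D_1^{(p^k)}\subseteq\mathbb{Z}_{p^n},$$ and define the binary sequence $(s_i)$ of period $N$ by $s_i=1$ if $i\bmod N\in C_1$ and $s_i=0$ otherwise. Let $S(x)=\sum_{i=0}^{N-1}s_ix^i$. Let $\eta_i^{(p)}=\sum_{x\in D_i^{(p)}}e^{2\pi\sqrt{-1}x/p}$ for $i=0,1$. Then for $a\in\mathbb{Z}_{N}$: $$S(\omega_N^a)=\begin{cases}\frac{p^n+1}{2}, & a=0,\\[2pt] \frac{p^m+1}{2}+p^m\eta_1^{(p)}, & a\in p^mD_0^{(p^{n-m})},\ m\in\{0,1,\dots,n-1\},\\[2pt] \frac{p^m+1}{2}+p^m\eta_0^{(p)}, & a\in p^mD_1^{(p^{n-m})},\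 m\in\{0,1,\dots,n-1\}.\end{cases}$$
   Context: The sequence $(s_i)$ is the Ding–Helleseth generalized cyclotomic sequence of period $p^n$. The sets $\{0\}$, $p^{n-k}D_0^{(p^k)}$, $p^{n-k}D_1^{(p^k)}$ ($1\le k\le n$) partition $\mathbb{Z}_{p^n}$. *)

From HB Require Import structures.
From mathcomp Require Import all_boot all_order all_algebra.
From mathcomp Require Import reals trigo.
From mathcomp Require Import complex.
Set Implicit Arguments. Unset Strict Implicit. Unset Printing Implicit Defensive.
Import Order.TTheory GRing.Theory Num.Theory.

Definition is_sq_mod (q x : nat) : bool :=
  [exists y : 'I_q, (y ^ 2 == x %[mod q])%N].

Definition Dset (p k i x : nat) : bool :=
  [&& (x < p ^ k)%N, coprime x p &
      (if i == 0%N then is_sq_mod (p ^ k) x else ~~ is_sq_mod (p ^ k) x)].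

Definition inPD (p m k i a : nat) : bool :=
  [exists x : 'I_(p ^ k), Dset p k i x && (a == p ^ m * x)%N].

Definition inC1 (p n a : nat) : bool :=
  (a == 0)%N || [exists k : 'I_n.+1, (1 <= k)%N && inPD p (n - k) k 1 a].

Definition sseq (p n i : nat) : bool := inC1 p n (i %% p ^ n).

Local Open Scope ring_scope.
Local Open Scope complex_scope.

Definition omega (R : realType) (M : nat) : R[i] :=
  (cos (2 * pi / M%:R)) +i* (sin (2 * pi / M%:R)).

Definition Spoly (R : realType) (p n : nat) (x : R[i]) : R[i] :=
  \sum_(j < p ^ n) (sseq p n j)%:R * x ^+ j.

Definition gauss_eta (R : realType) (p i : nat) : R[i] :=
  \sum_(x < p | Dset p 1 i x) omega R p ^+ x.
Arguments Spoly R p n x : clear implicits.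
Arguments omega R M : clear implicits.
Arguments gauss_eta R p i : clear implicits.

From HB Require Import structures.
From mathcomp Require Import all_boot all_order all_algebra.
From mathcomp Require Import reals trigo.
From mathcomp Require Import complex.
From mathcomp Require Import finfield.
From mathcomp Require Import zify ring lra.
Import Order.TTheory GRing.Theory Num.Theory.
Set Implicit Arguments. Unset Strict Implicit. Unset Printing Implicit Defensive.
Local Open Scope ring_scope.
Local Open Scope complex_scope.

(* A point of C_1 in Z_(p^(n+1)) is either p times a point of C_1 in Z_(p^n) or a unit
   that is a non-square mod p^(n+1), so S_(n+1) is S_n plus the sum of omega^(a u) over
   u in D_1^(p^(n+1)).  By Hensel's lemma a unit is a square mod p^k iff it is one mod p,
   so this sum only sees u mod p.  For a = p^m x with x a unit it is p^(k-1) (p-1)/2 when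
   k <= m (every term is 1), p^m eta when k = m + 1 (substitute u := x u, which fixes or
   swaps squares and non-squares according to the class of x, by Euler's criterion), and
   0 when k > m + 1 (it factors through a full sum of primitive p^(k-m-1)-th roots of
   unity).  Summing over k gives the closed forms. *)

Section BlockSums.
Variable V : nmodType.
Implicit Type F : nat -> V.

Lemma sum_nat_blocks F m d :
  \sum_(0 <= j < m * d) F j = \sum_(0 <= q < m) \sum_(0 <= r < d) F (q * d + r)%N.
Proof.
rewrite big_nat_mul; apply: eq_bigr => q _.
by rewrite mulSn -{1}[(q * d)%N]add0n big_addn addnK; apply: eq_bigr => r _; rewrite addnC.
Qed.

Lemma sum_nat_periodic F m d : (forall j, F (j + d)%N = F j) ->
  \sum_(0 <= j < m * d) F j = (\sum_(0 <= r < d) F r) *+ m.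
Proof.
move=> F_per; rewrite sum_nat_blocks -[m in RHS]subn0 -sumr_const_nat.
apply: eq_bigr => q _; apply: eq_bigr => r _.
by elim: q => [|q IHq]; rewrite ?add0n // mulSnr addnAC F_per.
Qed.

Lemma sum_nat_dvdn F m d : (0 < d)%N ->
  \sum_(0 <= j < m * d | (d %| j)%N) F j = \sum_(0 <= q < m) F (q * d)%N.
Proof.
move=> d_gt0; rewrite big_mkcond sum_nat_blocks; apply: eq_bigr => q _.
rewrite big_ltn // addn0 dvdn_mull //= big_nat_cond big1 ?addr0 // => r /andP[/andP[r_gt0 r_lt] _].
by rewrite dvdn_addr ?dvdn_mull // gtnNdvd.
Qed.
End BlockSums.

Lemma sum_prim_root_eq0 (F : idomainType) n (z : F) :
  n.-primitive_root z -> (1 < n)%N -> \sum_(i < n) z ^+ i = 0.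
Proof.
move=> prim_z n_gt1; have z_neq1 : z != 1.
  apply: contraTneq n_gt1 => z1; have := prim_order_dvd prim_z 1.
  by rewrite expr1 z1 eqxx dvdn1 => /eqP->.
have := subrX1 z n; rewrite prim_expr_order // subrr => /esym/eqP.
by rewrite mulf_eq0 subr_eq0 (negbTE z_neq1) => /eqP.
Qed.

Section Omega.
Variable R : realType.

Lemma cos_lt1 (x : R) : 0 < x < pi *+ 2 -> cos x < 1.
Proof.
move=> /andP[x_gt0 x_lt2pi]; have sin_gt0 : 0 < sin (x / 2).
  by apply: sin_gt0_pi; apply/andP; split; lra.
have -> : x = (x / 2) *+ 2 by rewrite mulr2n; field.
rewrite cos_mulr2n cos2sin2; nra.
Qed.

Lemma omegaX M j : omega R M ^+ j =
  cos (j%:R * (2 * pi / M%:R)) +i* sin (j%:R * (2 * pi / M%:R)).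
Proof.
elim: j => [|j IHj]; first by rewrite expr0 !mul0r cos0 sin0.
rewrite exprS IHj /omega; set t := 2 * pi / M%:R.
rewrite -addn1 natrD mulrDl mul1r cosD sinD.
by apply/eqP; rewrite eq_complex /=; apply/andP; split; apply/eqP; ring.
Qed.

Lemma omega_prim_root M : (0 < M)%N -> M.-primitive_root (omega R M).
Proof.
move=> M_gt0; have M_pos : 0 < M%:R :> R by rewrite ltr0n.
apply/andP; split => //; apply/forallP => i; rewrite unity_rootE omegaX.
have [iM|iM] := eqVneq i.+1 M.
  have -> : i.+1%:R * (2 * pi / M%:R) = pi *+ 2 :> R.
    by rewrite iM mulr2n; field; rewrite pnatr_eq0 -lt0n.
  by rewrite cos2pi sin2pi; apply/eqP/eqP.
apply/eqP/negbTE/negP => /eqP[+ _]; apply/eqP; rewrite lt_eqF // cos_lt1 //.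
have pi_gt0 := @pi_gt0 R.
have i_lt : i.+1%:R < M%:R :> R by rewrite ltr_nat ltn_neqAle iM ltn_ord.
apply/andP; split; first by rewrite mulr_gt0 ?divr_gt0 ?mulr_gt0.
rewrite mulrA ltr_pdivrMr // mulr2n; nra.
Qed.

Lemma omegaM M d : (0 < M)%N -> (0 < d)%N -> omega R (M * d) ^+ d = omega R M.
Proof.
move=> M_gt0 d_gt0; rewrite omegaX /omega natrM.
by congr (cos _ +i* sin _); field; rewrite !pnatr_eq0 -!lt0n M_gt0 d_gt0.
Qed.
End Omega.

Lemma card_rootsXn (F : finIdomainType) n (c : F) :
  (0 < n)%N -> (#|[set z : F | z ^+ n == c]| <= n)%N.
Proof.
move=> n_gt0; rewrite cardE -ltnS -(size_XnsubC c n_gt0).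
apply: max_poly_roots; last exact: enum_uniq.
  by rewrite -size_poly_eq0 size_XnsubC.
apply/allP => z; rewrite mem_enum inE => /eqP zn.
by rewrite rootE !hornerE zn subrr.
Qed.

Definition is_square (F : finNzRingType) (z : F) := [exists y : F, y ^+ 2 == z].

Section FpSquares.
Variable p : nat.
Hypothesis p_pr : prime p.
Hypothesis p_odd : odd p.
Local Notation F := 'F_p.

Lemma half_double_pred : (p./2).*2 = p.-1.
Proof. by rewrite -[in RHS](odd_double_half p) p_odd. Qed.

Lemma Fp_expr_pred (z : F) : z != 0 -> z ^+ p.-1 = 1.
Proof.
move=> z_neq0; apply: (mulfI z_neq0).
rewrite -exprS prednK ?prime_gt0 // mulr1.
by have := expf_card z; rewrite card_Fp.
Qed.

Lemma Fp_oner_neqN1 : (1 : F) != -1.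
Proof.
rewrite -addr_eq0 -[1 + 1]/(2%:R : F) -(dvdn_pcharf (pchar_Fp p_pr)).
apply: contraL p_odd => /(dvdn_leq (isT : (0 < 2)%N)) p_le2.
by have -> : p = 2%N by have := prime_gt1 p_pr; lia.
Qed.

Lemma Fp_square_expr_half (z : F) : z != 0 -> is_square z -> z ^+ p./2 = 1.
Proof.
move=> z_neq0 /existsP[y /eqP yz]; rewrite -yz -exprM mul2n half_double_pred.
by rewrite Fp_expr_pred //; apply: contraNneq z_neq0 => y0; rewrite -yz y0 expr0n.
Qed.

Lemma card_Fp_squares_ge : (p./2 <= #|[set z : F | (z != 0%R) && is_square z]|)%N.
Proof.
set Q := [set z : F | _]; rewrite -leq_double half_double_pred -muln2.
have <- : #|[set y : F | y != 0]| = p.-1.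
  by have := cardsC1 (0 : F); rewrite card_Fp // => <-; apply: eq_card => y; rewrite !inE.
rewrite -sum1dep_card.
rewrite (partition_big (fun y : F => y ^+ 2) (fun z => z \in Q)) => [|y y_neq0]; last first.
  by rewrite inE expf_neq0 //; apply/existsP; exists y.
rewrite -sum_nat_const; apply: leq_sum => z _; rewrite sum1dep_card.
apply: leq_trans (subset_leq_card _) (card_rootsXn z (isT : (0 < 2)%N)).
by apply/subsetP => y; rewrite !inE => /andP[].
Qed.

Lemma odd_prime_half_gt0 : (0 < p./2)%N.
Proof. by rewrite half_gt0; case: p p_pr p_odd => [|[|[]]]. Qed.

Lemma Fp_nonzero_squares : [set z : F | (z != 0) && is_square z] = [set z | z ^+ p./2 == 1].
Proof.
apply/eqP; rewrite eqEcard.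
rewrite (leq_trans (card_rootsXn 1 odd_prime_half_gt0) card_Fp_squares_ge) andbT.
by apply/subsetP => y; rewrite !inE => /andP[y0 /(Fp_square_expr_half y0)->].
Qed.

Lemma Fp_squareE (z : F) : z != 0 -> is_square z = (z ^+ p./2 == 1).
Proof. by move=> z_neq0; have /setP/(_ z) := Fp_nonzero_squares; rewrite !inE z_neq0. Qed.

Lemma Fp_squareM (x y : F) : x != 0 -> y != 0 ->
  is_square (x * y) = (is_square x == is_square y).
Proof.
have expr_half_pm1 (z : F) : z != 0 -> (z ^+ p./2 == 1) || (z ^+ p./2 == -1).
  by move=> z0; rewrite -sqrf_eq1 -exprM muln2 half_double_pred Fp_expr_pred.
move=> x0 y0; rewrite !Fp_squareE ?mulf_neq0 // exprMn.
have N1_neq1 := Fp_oner_neqN1; rewrite eq_sym in N1_neq1.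
case/orP: (expr_half_pm1 x x0) => /eqP->; case/orP: (expr_half_pm1 y y0) => /eqP->;
  by rewrite ?mulr1 ?mul1r ?mulrNN ?eqxx ?(negbTE N1_neq1) ?(negbTE Fp_oner_neqN1).
Qed.

Lemma card_Fp_nonsquares : #|[set z : F | (z != 0) && ~~ is_square z]| = p./2.
Proof.
have card_sq : #|[set z : F | (z != 0) && is_square z]| = p./2.
  apply/eqP; rewrite eqn_leq card_Fp_squares_ge Fp_nonzero_squares andbT.
  exact: card_rootsXn odd_prime_half_gt0.
have := cardsID [set z : F | is_square z] [set~ 0].
rewrite cardsC1 card_Fp // -half_double_pred -addnn.
have -> : [set~ 0] :&: [set z | is_square z] = [set z : F | (z != 0) && is_square z].
  by apply/setP => z; rewrite !inE.
have -> : [set~ 0] :\: [set z | is_square z] = [set z : F | (z != 0) && ~~ is_square z].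
  by apply/setP => z; rewrite !inE andbC.
by rewrite card_sq => /addnI.
Qed.
End FpSquares.

Lemma is_sq_modP q x : (0 < q)%N ->
  reflect (exists y, y ^ 2 = x %[mod q])%N (is_sq_mod q x).
Proof.
move=> q_gt0; apply: (iffP existsP) => [[y /eqP yx]|[y yx]]; first by exists y.
by exists (Ordinal (ltn_pmod y q_gt0)); apply/eqP; rewrite /= modnXm.
Qed.

Lemma is_sq_mod_mod q x : is_sq_mod q (x %% q) = is_sq_mod q x.
Proof. by rewrite /is_sq_mod modn_mod. Qed.

Definition nonresidue p u := coprime u p && ~~ is_sq_mod p u.

Section SquaresModPrimePowers.
Variable p : nat.
Hypothesis p_pr : prime p.
Hypothesis p_odd : odd p.
Local Notation F := 'F_p.

Let p_gt0 : (0 < p)%N := prime_gt0 p_pr.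

Lemma natFp_eqmod m n : ((m%:R : F) == n%:R) = (m == n %[mod p])%N.
Proof. by rewrite -val_eqE /= !val_Fp_nat. Qed.

Lemma coprime_natFp x : coprime x p = ((x%:R : F) != 0).
Proof. by rewrite coprime_sym prime_coprime // -(dvdn_pcharf (pchar_Fp p_pr)). Qed.

Lemma is_sq_mod_Fp x : is_sq_mod p x = is_square (x%:R : F).
Proof.
apply/(is_sq_modP _ p_gt0)/existsP => [[y yx]|[y /eqP yx]].
  by exists y%:R; rewrite -natrX natFp_eqmod yx.
by exists y; apply/eqP; rewrite -natFp_eqmod natrX natr_Zp yx.
Qed.

Lemma is_sq_modM x y : coprime x p -> coprime y p ->
  is_sq_mod p (x * y) = (is_sq_mod p x == is_sq_mod p y).
Proof. by rewrite !coprime_natFp !is_sq_mod_Fp natrM; apply: Fp_squareM. Qed.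

Lemma sq_mod_pexpS_lift x r : coprime x p -> (0 < r)%N ->
  (exists y, y ^ 2 = x %[mod p ^ r])%N -> (exists y, y ^ 2 = x %[mod p ^ r.+1])%N.
Proof.
move=> x_cop r_gt0 [y yx]; set P := (p ^ r)%N.
have p_dvd_P : (p %| P)%N by rewrite -{1}(expn1 p) dvdn_exp2l.
have y_cop : coprime y p.
  rewrite -(@coprime_pexpl 2) // -coprime_modl.
  by rewrite -(modn_dvdm _ p_dvd_P) yx modn_dvdm // coprime_modl.
(* With y^2 = a P + c and x = b P + c, (y + t P)^2 = x mod P p once a + 2 y t = b mod p. *)
set a := (y ^ 2 %/ P)%N; set b := (x %/ P)%N; set c := (x %% P)%N.
have y2E : (y ^ 2 = a * P + c)%N by rewrite /c -yx -divn_eq.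
pose t : nat := (b%:R - a%:R) / (2 * y)%:R : F.
have tE : (a + 2 * y * t = b %[mod p])%N.
  apply/eqP; rewrite -natFp_eqmod natrD natrM natr_Zp mulrC divfK ?(addrC a%:R) ?subrK //.
  by rewrite -coprime_natFp coprimeMl coprime2n p_odd.
exists (y + t * P)%N; rewrite [(p ^ r.+1)%N]expnSr sqrnD y2E.
have /dvdnP[k ->] : (P * p %| (t * P) ^ 2)%N.
  by rewrite expnMn dvdn_mull // -mulnn dvdn_pmul2l ?expn_gt0 ?p_gt0.
have -> : (a * P + c + k * (P * p) + 2 * (y * (t * P)) = k * (P * p) + ((a + 2 * y * t) * P + c))%N
  by ring.
rewrite modnMDl (divn_eq x P) -/b -/c -/P [(P * p)%N]mulnC.
by rewrite -modnDml -muln_modl tE muln_modl modnDml.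
Qed.

Lemma is_sq_mod_pexp k x : (0 < k)%N -> coprime x p ->
  is_sq_mod (p ^ k) x = is_sq_mod p x.
Proof.
move=> k_gt0 x_cop; have p_dvd_pk : (p %| p ^ k)%N by rewrite -{1}(expn1 p) dvdn_exp2l.
have pk_gt0 : (0 < p ^ k)%N by rewrite expn_gt0 p_gt0.
apply/(is_sq_modP _ pk_gt0)/(is_sq_modP _ p_gt0).
  by case=> y yx; exists y; rewrite -(modn_dvdm _ p_dvd_pk) yx modn_dvdm.
elim: k k_gt0 {p_dvd_pk pk_gt0} => [//|[|k] IHk] _ sq_x; first by rewrite expn1.
exact: sq_mod_pexpS_lift (IHk isT sq_x).
Qed.

Lemma nonresidue_mod u : nonresidue p (u %% p) = nonresidue p u.
Proof. by rewrite /nonresidue coprime_modl is_sq_mod_mod. Qed.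

Lemma nonresidueDr u d : (p %| d)%N -> nonresidue p (u + d) = nonresidue p u.
Proof. by move=> p_dvd_d; rewrite -nonresidue_mod -modnDmr (eqP p_dvd_d) addn0 nonresidue_mod. Qed.

Lemma Dset1E k u : (0 < k)%N -> Dset p k 1 u = (u < p ^ k)%N && nonresidue p u.
Proof.
move=> k_gt0; rewrite /Dset /nonresidue.
by case: (coprime u p) / idP => u_cop; rewrite ?andbF //= is_sq_mod_pexp.
Qed.

Lemma Dset_mulE x u : coprime x p ->
  Dset p 1 (is_sq_mod p x) (x * u %% p) = nonresidue p u.
Proof.
move=> x_cop; rewrite /Dset /nonresidue expn1 ltn_pmod // coprime_modl is_sq_mod_mod.
rewrite coprimeMl x_cop /=; case: (coprime u p) / idP => //= u_cop.
by rewrite is_sq_modM //; case: (is_sq_mod p x); case: (is_sq_mod p u).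
Qed.

Lemma sum_nonresidue : (\sum_(0 <= u < p) nonresidue p u)%N = p./2.
Proof.
rewrite -(card_Fp_nonsquares p_pr p_odd) -sum1dep_card.
rewrite -{1}(Fp_cast p_pr) big_mkord [RHS]big_mkcond /=; apply: eq_bigr => u _.
by rewrite /nonresidue coprime_natFp is_sq_mod_Fp natr_Zp; case: (_ && _).
Qed.
End SquaresModPrimePowers.

Section C1.
Variable p : nat.
Hypothesis p_gt1 : (1 < p)%N.

Lemma inPD0 k i x : inPD p 0 k i x = Dset p k i x.
Proof.
apply/existsP/idP => [[y /andP[y_in /eqP->]]|x_in]; first by rewrite mul1n.
by exists (Ordinal (proj1 (andP x_in))); rewrite /= mul1n eqxx andbT.
Qed.

Lemma inPD_mulp m k i x : inPD p m.+1 k i (p * x) = inPD p m k i x.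
Proof. by apply: eq_existsb => y; rewrite expnS -mulnA eqn_pmul2l // ltnW. Qed.

Lemma inPD_dvdn m k i x : inPD p m.+1 k i x -> (p %| x)%N.
Proof. by case/existsP=> y /andP[_ /eqP->]; rewrite expnS -mulnA dvdn_mulr. Qed.

Lemma inC1E n j : inC1 p n j = (j == 0)%N || has (fun k => inPD p (n - k) k 1 j) (iota 1 n).
Proof.
congr (_ || _); apply/existsP/hasP => [[k /andP[k_gt0 k_in]]|[k k_iota k_in]].
  by exists (val k); rewrite // mem_iota k_gt0 add1n ltn_ord.
move: k_iota; rewrite mem_iota add1n => /andP[k_gt0 k_lt].
by exists (Ordinal k_lt); rewrite k_gt0.
Qed.

Lemma iota1S n : iota 1 n.+1 = rcons (iota 1 n) n.+1.
Proof. by rewrite -cats1 -[n.+1]addn1 iotaD add1n addn1. Qed.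

Lemma dvdn_coprimeF x : (p %| x)%N -> coprime x p = false.
Proof. by move=> p_dvd_x; rewrite /coprime (gcdn_idPr p_dvd_x) gtn_eqF. Qed.

Lemma inC1_mulp n q : inC1 p n.+1 (p * q) = inC1 p n q.
Proof.
rewrite !inC1E iota1S -cats1 has_cat muln_eq0 (negbTE (lt0n_neq0 (ltnW p_gt1))) /=.
rewrite subnn inPD0 orbF /Dset dvdn_coprimeF ?dvdn_mulr // andbF orbF.
congr (_ || _); apply: eq_in_has => k; rewrite mem_iota add1n => /andP[_ k_lt].
by rewrite subSn // inPD_mulp.
Qed.

Lemma inC1_coprime n j : ~~ (p %| j)%N -> inC1 p n.+1 j = Dset p n.+1 1 j.
Proof.
move=> p_ndvd_j; rewrite inC1E iota1S -cats1 has_cat /= subnn inPD0 orbF.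
have -> : (j == 0)%N = false by apply: contraNF p_ndvd_j => /eqP->.
rewrite /= -[RHS]orFb; congr (_ || _); apply/negbTE/hasPn => k.
rewrite mem_iota add1n => /andP[_ k_lt]; rewrite subSn //.
by apply: contra p_ndvd_j; apply: inPD_dvdn.
Qed.
End C1.

Section NonresidueSums.
Variable R : realType.
Variable p : nat.
Hypothesis p_pr : prime p.
Hypothesis p_odd : odd p.

Local Notation om k := (omega R (p ^ k)).

Let p_gt0 : (0 < p)%N := prime_gt0 p_pr.
Let pexp_gt0 k : (0 < p ^ k)%N. Proof. by rewrite expn_gt0 p_gt0. Qed.
Let dvdn_pexp k : (0 < k)%N -> (p %| p ^ k)%N.
Proof. by move=> k_gt0; rewrite -{1}(expn1 p) dvdn_exp2l. Qed.

Lemma om_prim_root k : (p ^ k).-primitive_root (om k).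
Proof. exact: omega_prim_root. Qed.

Lemma om_pexpM k m e : (m <= k)%N -> om k ^+ (p ^ m * e) = om (k - m) ^+ e.
Proof. by move=> mk; rewrite exprM -{1}(subnK mk) expnD omegaM. Qed.

Definition nonresidue_sum k a : R[i] :=
  \sum_(0 <= u < p ^ k) (nonresidue p u)%:R * om k ^+ (a * u).

Lemma nonresidue_sum_pexpM k m x : (m < k)%N ->
  nonresidue_sum k (p ^ m * x) = (p ^ m)%:R * nonresidue_sum (k - m) x.
Proof.
move=> lt_mk; have km_gt0 : (0 < k - m)%N by rewrite subn_gt0.
rewrite /nonresidue_sum -{1}(subnKC (ltnW lt_mk)) expnD mulr_natl -sum_nat_periodic.
  by apply: eq_bigr => u _; rewrite -mulnA om_pexpM // ltnW.
have om_period : om (k - m) ^+ (x * p ^ (k - m)) = 1.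
  by rewrite mulnC exprM (prim_expr_order (om_prim_root _)) expr1n.
by move=> u; rewrite nonresidueDr ?dvdn_pexp // mulnDr exprD om_period mulr1.
Qed.

Lemma nonresidue_sum_pexp k y : (0 < k)%N ->
  nonresidue_sum k (p ^ k * y) = (p ^ k.-1 * p./2)%:R.
Proof.
move=> k_gt0; have k_pred : (k.-1 < k)%N by rewrite prednK.
have -> : (p ^ k * y = p ^ k.-1 * (p * y))%N by rewrite mulnA -expnSr prednK.
rewrite nonresidue_sum_pexpM // natrM; congr (_ * _).
have -> : (k - k.-1 = 1)%N by rewrite -{1}(prednK k_gt0) subSnn.
rewrite -(sum_nonresidue p_pr p_odd) natr_sum /nonresidue_sum; apply: eq_bigr => u _.
by rewrite -mulnA exprM -{1}(expn1 p) (prim_expr_order (om_prim_root 1)) expr1n mulr1.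
Qed.

Lemma nonresidue_sum_eq0 r x : (1 < r)%N -> coprime x p -> nonresidue_sum r x = 0.
Proof.
move=> r_gt1 x_cop; have r1_gt0 : (0 < r.-1)%N by rewrite -ltnS prednK // ltnW.
have r1_le : (1 <= r)%N := ltnW r_gt1.
rewrite /nonresidue_sum -{1}(prednK r1_le) expnSr sum_nat_blocks.
set C := \sum_(0 <= s < p) (nonresidue p s)%:R * om r ^+ (x * s).
transitivity (\sum_(0 <= q < p ^ r.-1) C * (om r.-1 ^+ x) ^+ q).
  apply: eq_bigr => q _; rewrite big_distrl /=; apply: eq_bigr => s _.
  rewrite addnC nonresidueDr ?dvdn_mull // mulnDr exprD mulrA; congr (_ * _).
  have -> : (x * (q * p) = p ^ 1 * (x * q))%N by rewrite expn1; ring.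
  by rewrite om_pexpM // subn1 exprM.
rewrite -big_distrr /= big_mkord sum_prim_root_eq0 ?mulr0 //.
  by rewrite prim_root_exp_coprime ?om_prim_root // coprimeXr.
by rewrite -{1}(expn0 p) ltn_exp2l ?prime_gt1.
Qed.

Lemma nonresidue_sum_gauss x : coprime x p ->
  nonresidue_sum 1 x = gauss_eta R p (is_sq_mod p x).
Proof.
move=> x_cop; rewrite /nonresidue_sum /gauss_eta expn1 big_mkord [RHS]big_mkcond /=.
pose mulx (u : 'I_p) : 'I_p := Ordinal (ltn_pmod (x * u) p_gt0).
have mulx_inj : injective mulx.
  have x_neq0 : (x%:R : 'F_p) != 0 by rewrite -coprime_natFp.
  move=> u v /(congr1 val)/eqP /=; rewrite -natFp_eqmod // !natrM => /eqP/(mulfI x_neq0).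
  by move/eqP; rewrite natFp_eqmod // !modn_small // => /eqP/val_inj.
rewrite [RHS](reindex_inj mulx_inj); apply: eq_bigr => u _; rewrite /= Dset_mulE //.
rewrite (prim_expr_mod (omega_prim_root _ p_gt0)).
by case: (nonresidue p u); rewrite ?mul1r ?mul0r.
Qed.

Definition C1_sum n a : R[i] := \sum_(0 <= j < p ^ n) (inC1 p n j)%:R * om n ^+ (a * j).

Lemma Spoly_omegaX n a : Spoly R p n (om n ^+ a) = C1_sum n a.
Proof.
by rewrite /Spoly /C1_sum big_mkord; apply: eq_bigr => j _; rewrite /sseq modn_small // exprM.
Qed.

Lemma C1_sumS n a : C1_sum n.+1 a = C1_sum n a + nonresidue_sum n.+1 a.
Proof.
have p_gt1 := prime_gt1 p_pr.
rewrite /nonresidue_sum [X in _ = _ + X](bigID (fun j => p %| j)%N) /=.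
rewrite {1}/C1_sum (bigID (fun j => p %| j)%N) /=.
rewrite [X in _ = _ + (X + _)]big1 ?add0r => [|j /(dvdn_coprimeF p_gt1) j_cop]; last first.
  by rewrite /nonresidue j_cop mul0r.
apply: f_equal2.
  rewrite expnSr sum_nat_dvdn /C1_sum; last exact: p_gt0.
  apply: eq_bigr => q _.
  by rewrite [(q * p)%N]mulnC (inC1_mulp p_gt1) [(a * _)%N]mulnCA exprM omegaM ?expn_gt0 ?p_gt0.
rewrite [LHS]big_nat_cond [RHS]big_nat_cond; apply: eq_bigr => j /andP[/andP[_ j_lt] j_ndvd].
by rewrite (inC1_coprime _ j_ndvd) (Dset1E p_pr) // j_lt.
Qed.

Lemma C1_sum_pexpM n m x : coprime x p ->
  C1_sum n (p ^ m * x) = if (n <= m)%N then ((p ^ n)%:R + 1) / 2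
    else ((p ^ m)%:R + 1) / 2 + (p ^ m)%:R * gauss_eta R p (is_sq_mod p x).
Proof.
have two_neq0 : 2 != 0 :> R[i] by rewrite pnatr_eq0.
have pE : p%:R = 2 * (p./2)%:R + 1 :> R[i].
  by rewrite -{1}(odd_double_half p) p_odd natrD -muln2 natrM addrC mulrC.
move=> x_cop; elim: n => [|n IHn].
  by rewrite /C1_sum expn0 big_nat1 /inC1 eqxx muln0 expr0 mulr1 -mulr2n divff.
rewrite C1_sumS IHn.
have [n_lt_m|m_lt_n|<-] := ltngtP n m.
- have -> : (p ^ m * x = p ^ n.+1 * (p ^ (m - n.+1) * x))%N by rewrite mulnA -expnD subnKC.
  by rewrite (nonresidue_sum_pexp _ (ltn0Sn n)) /= expnSr !natrM pE; field.
- have m_lt_Sn : (m < n.+1)%N by rewrite ltnS ltnW.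
  have vanish : nonresidue_sum (n.+1 - m) x = 0.
    have r_gt1 : (1 < n.+1 - m)%N by lia.
    exact: (nonresidue_sum_eq0 r_gt1 x_cop).
  by rewrite (nonresidue_sum_pexpM _ m_lt_Sn) vanish mulr0 addr0.
- by rewrite (nonresidue_sum_pexpM _ (ltnSn n)) subSnn nonresidue_sum_gauss.
Qed.

Lemma C1_sum0 n : C1_sum n 0 = ((p ^ n)%:R + 1) / 2.
Proof.
have -> : C1_sum n 0 = C1_sum n (p ^ n * 1).
  apply: eq_bigr => j _.
  by rewrite mul0n muln1 exprM (prim_expr_order (om_prim_root n)) expr1n.
by rewrite C1_sum_pexpM ?coprime1n // leqnn.
Qed.

Lemma C1_sum_Dset n m i x : (m < n)%N -> Dset p (n - m) i x ->
  C1_sum n (p ^ m * x) = ((p ^ m)%:R + 1) / 2 + (p ^ m)%:R * gauss_eta R p (i == 0%N).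
Proof.
move=> m_lt /and3P[_ x_cop x_sq]; have nm_gt0 : (0 < n - m)%N by rewrite subn_gt0.
rewrite C1_sum_pexpM // leqNgt m_lt /=.
move: x_sq; rewrite (is_sq_mod_pexp p_pr p_odd nm_gt0 x_cop).
by case: (i == 0%N) => [->|/negbTE->].
Qed.
End NonresidueSums.

Theorem mainTheorem2 (R : realType) (p n : nat) :
  prime p -> odd p -> (0 < n)%N ->
  forall a : nat, (a < p ^ n)%N ->
    (a = 0%N ->
       Spoly R p n (omega R (p ^ n) ^+ a) = ((p ^ n)%:R + 1) / 2%:R) /\
    (forall m : nat, (m < n)%N -> inPD p m (n - m) 0 a ->
       Spoly R p n (omega R (p ^ n) ^+ a)
       = ((p ^ m)%:R + 1) / 2%:R + (p ^ m)%:R * gauss_eta R p 1) /\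
    (forall m : nat, (m < n)%N -> inPD p m (n - m) 1 a ->
       Spoly R p n (omega R (p ^ n) ^+ a)
       = ((p ^ m)%:R + 1) / 2%:R + (p ^ m)%:R * gauss_eta R p 0).
Proof.
move=> p_pr p_odd _ a _; rewrite Spoly_omegaX.
split; [|split].
- by move=> ->; rewrite C1_sum0.
- by move=> m m_lt /existsP[x /andP[x_in /eqP->]]; rewrite (C1_sum_Dset _ _ _ m_lt x_in).
- by move=> m m_lt /existsP[x /andP[x_in /eqP->]]; rewrite (C1_sum_Dset _ _ _ m_lt x_in).
Qed.
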